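(* Let $\lambda>1$, $b>0$, $s'\in(0,1]$, $r\in\mathbb{R}$, and consider the system $$x_{n+1}=s'y_n,\qquad y_{n+1}=x_n^{\lambda}e^{r-bx_{n+1}-x_n},\qquad n\ge0,$$ on $[0,\infty)^2$; put $a=r+\ln s'$. (a) Every orbit converges to $(0,0)$ if and only if $a<(\lambda-1)[1-\ln(\lambda-1)]$. (b) If $(\lambda-1)[1-\ln(\lambda-1)]<a<(\lambda-1)[1-\ln(\lambda-1)+\ln(b+1)]$, then $(0,0)$ is the only fixed point of the system in $[0,\infty)^2$, but the system has orbits in the positive quadrant that do not converge to $(0,0)$. (c) If $b\le\frac{\lambda-1}{\lambda}e^{1/(\lambda-1)}-1$ and $(\lambda-1)[1-\ln(\lambda-1)+\ln(b+1)]\le a\le\lambda-(\lambda-1)\ln\lambda$, and $x^*$ is the smallest positive solution of $x=x^\lambda e^{a-(b+1)x}$, then there are initial points $(x_0,y_0)\in[0,x^* )\times[0,x^*/s')$ whose orbit does not converge to $(0,0)$. (d) Under the hypotheses of (c), there are initial points $(x_0,y_0)\in([x^*,\lambda]\times[0,x^*/s'])\cup([0,x^*]\times[x^*/s',\lambda/s'])$ whose orbit does not converge to $(0,0)$. *)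

From Stdlib Require Import Reals.
Open Scope R_scope.

(* x^l for x >= 0 and real l > 0, with the convention 0^l = 0
   (Stdlib's Rpower 0 l = exp (l * ln 0) = 1 would be wrong). *)
Definition rpow (x l : R) : R := if Rle_dec x 0 then 0 else Rpower x l.

Definition step (lam b s r : R) (p : R * R) : R * R :=
  let x := fst p in let y := snd p in
  (s * y, rpow x lam * exp (r - b * (s * y) - x)).

Fixpoint orbit (lam b s r : R) (p0 : R * R) (n : nat) : R * R :=
  match n with
  | O => p0
  | S k => step lam b s r (orbit lam b s r p0 k)
  end.

Definition conv0 (lam b s r : R) (p0 : R * R) : Prop :=
  Un_cv (fun n => fst (orbit lam b s r p0 n)) 0 /\
  Un_cv (fun n => snd (orbit lam b s r p0 n)) 0.

From Stdlib Require Import Reals Lra Lia Classical.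
Open Scope R_scope.

(* Put a = r + ln s and g = growth lam a, i.e. g(x) = (lam - 1) ln x + a - x.  Two steps give
   x_(n+2) = x_n e^(g(x_n) - b x_(n+1)), and g is maximal at lam - 1 with
   g(lam - 1) = a - (lam - 1)(1 - ln (lam - 1)).  Below this threshold every orbit
   contracts geometrically along both parities.  Otherwise g has a zero z, and (z, 0)
   lies on a 2-cycle.  Positive fixed points are the zeros of g(x) - b x, which is
   maximal at (lam - 1)/(b + 1): this rules them out in (b) and places the smallest one
   below lam in (d).  For the positive orbit of (b) start with a tiny y0, so that the
   odd subsequence stays tiny; as x0 moves from near 0 to lam, the even subsequence
   switches from first falling below a small del to first exceeding lam - 1, and by
   connectedness some x0 does neither, keeping its even subsequence in (del, lam - 1). *)

Lemma rpow_exp_ln x l : 0 < x -> rpow x l = exp (l * ln x).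
Proof. intros Hx; unfold rpow; destruct (Rle_dec x 0); [lra | reflexivity]. Qed.

Lemma rpow_ge0 x l : 0 <= rpow x l.
Proof. unfold rpow; destruct (Rle_dec x 0); [lra | left; apply exp_pos]. Qed.

Lemma rpow0 l : rpow 0 l = 0.
Proof. unfold rpow; destruct (Rle_dec 0 0); lra. Qed.

Lemma exp_le_compat x y : x <= y -> exp x <= exp y.
Proof. intros [H | ->]; [left; apply exp_increasing; exact H | lra]. Qed.

Lemma mul_exp_le u E : 0 <= u -> E <= 0 -> u * exp E <= u.
Proof.
  intros Hu HE; rewrite <- (Rmult_1_r u) at 2.
  apply Rmult_le_compat_l; [exact Hu|]; rewrite <- exp_0; apply exp_le_compat, HE.
Qed.

Lemma mul_exp_lt u E : 0 < u -> E < 0 -> u * exp E < u.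
Proof.
  intros Hu HE; rewrite <- (Rmult_1_r u) at 2.
  apply Rmult_lt_compat_l; [exact Hu|]; rewrite <- exp_0; apply exp_increasing, HE.
Qed.

Lemma mul_exp_gt u E : 0 < u -> 0 < E -> u < u * exp E.
Proof.
  intros Hu HE; rewrite <- (Rmult_1_r u) at 1.
  apply Rmult_lt_compat_l; [exact Hu|]; rewrite <- exp_0; apply exp_increasing, HE.
Qed.

Lemma ln_le_sub1 x : 0 < x -> ln x <= x - 1.
Proof. intros Hx; pose proof (exp_ineq1_le (ln x)) as H; rewrite exp_ln in H; lra. Qed.

Lemma ln_affine_le_max L B x : 0 < L -> 0 < B -> 0 < x ->
  L * ln x - B * x <= L * ln (L / B) - L.
Proof.
  intros HL HB Hx.
  assert (Hm : 0 < L / B) by (apply Rdiv_lt_0_compat; lra).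
  assert (Hratio : ln (x / (L / B)) <= x / (L / B) - 1)
    by (apply ln_le_sub1, Rdiv_lt_0_compat; lra).
  unfold Rdiv at 1 in Hratio; rewrite ln_mult, ln_Rinv in Hratio by (try apply Rinv_0_lt_compat; lra).
  assert (Hscaled : L * (ln x + - ln (L / B)) <= L * (x * / (L / B) - 1))
    by (apply Rmult_le_compat_l; lra).
  replace (L * (x * / (L / B) - 1)) with (B * x - L) in Hscaled by (field; lra).
  lra.
Qed.

Lemma ln_affine_root L A B c : 0 < L -> 0 < B -> 0 < c -> 0 <= L * ln c + A - B * c ->
  exists z, 0 < z <= c /\ L * ln z + A - B * z = 0.
Proof.
  intros HL HB Hc Hpos.
  destruct (Req_dec (L * ln c + A - B * c) 0) as [E | E].
  { exists c; split; [lra | exact E]. }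
  (* In the variable [w = ln z] the function is continuous on all of R. *)
  set (F := fun w => L * w + A - B * exp w).
  assert (HF : continuity F) by (apply derivable_continuous; unfold F; reg).
  set (w0 := Rmin (ln c) (- Rabs A / L - 1) - 1).
  assert (Hw0 : w0 < ln c) by (pose proof (Rmin_l (ln c) (- Rabs A / L - 1)); unfold w0; lra).
  assert (Fw0 : F w0 < 0).
  { assert (Hw0' : w0 <= - Rabs A / L - 2)
      by (pose proof (Rmin_r (ln c) (- Rabs A / L - 1)); unfold w0; lra).
    assert (HLw0 : L * w0 <= L * (- Rabs A / L - 2)) by (apply Rmult_le_compat_l; lra).
    replace (L * (- Rabs A / L - 2)) with (- Rabs A - 2 * L) in HLw0 by (field; lra).
    pose proof (Rle_abs A); pose proof (Rmult_lt_0_compat _ _ HB (exp_pos w0)).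
    unfold F; lra. }
  assert (Fc : 0 < F (ln c)) by (unfold F; rewrite exp_ln; lra).
  destruct (IVT F w0 (ln c) HF Hw0 Fw0 Fc) as [w [Hw Fw]].
  exists (exp w); split; [split; [apply exp_pos |] |].
  - rewrite <- (exp_ln c) by exact Hc; apply exp_le_compat; lra.
  - unfold F in Fw; rewrite ln_exp; lra.
Qed.

Lemma not_Un_cv0_even (u : nat -> R) z : 0 < z -> (forall k, z <= u (2 * k)%nat) -> ~ Un_cv u 0.
Proof.
  intros Hz Hu Hcv; destruct (Hcv z Hz) as [N HN].
  specialize (HN (2 * N)%nat ltac:(lia)); specialize (Hu N).
  unfold R_dist in HN; rewrite Rminus_0_r in HN.
  pose proof (Rle_abs (u (2 * N)%nat)); lra.
Qed.

Lemma Un_cv0_half_geometric (v : nat -> R) M q : 0 <= q < 1 -> 0 <= M ->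
  (forall n, 0 <= v n <= M * q ^ Nat.div2 n) -> Un_cv v 0.
Proof.
  intros Hq HM Hv eps Heps.
  assert (Hq' : Rabs q < 1) by (rewrite Rabs_pos_eq; lra).
  destruct (pow_lt_1_zero q Hq' (eps / (M + 1))) as [N HN]; [apply Rdiv_lt_0_compat; lra|].
  exists (2 * N)%nat; intros n Hn; unfold R_dist; rewrite Rminus_0_r.
  assert (Hk : (Nat.div2 n >= N)%nat)
    by (rewrite Nat.div2_div; apply Nat.div_le_lower_bound; lia).
  specialize (HN _ Hk); specialize (Hv n).
  rewrite Rabs_pos_eq in HN by (apply pow_le; lra).
  rewrite Rabs_pos_eq by lra.
  assert (M * q ^ Nat.div2 n <= M * (eps / (M + 1))) by (apply Rmult_le_compat_l; lra).
  assert (M * (eps / (M + 1)) < eps).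
  { replace (M * (eps / (M + 1))) with (eps - eps / (M + 1)) by (field; lra).
    assert (0 < eps / (M + 1)) by (apply Rdiv_lt_0_compat; lra); lra. }
  lra.
Qed.

Lemma cp_const c x : continuity_pt (fun _ => c) x.
Proof. apply continuity_pt_const; intros u v; reflexivity. Qed.

Lemma cp_id x : continuity_pt (fun t => t) x.
Proof. exact (derivable_continuous_pt id x (derivable_pt_id x)). Qed.

Lemma cp_opp f x : continuity_pt f x -> continuity_pt (fun t => - f t) x.
Proof. apply (continuity_pt_opp f x). Qed.

Lemma cp_minus f g x :
  continuity_pt f x -> continuity_pt g x -> continuity_pt (fun t => f t - g t) x.
Proof. apply (continuity_pt_minus f g x). Qed.

Lemma cp_mul f g x :
  continuity_pt f x -> continuity_pt g x -> continuity_pt (fun t => f t * g t) x.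
Proof. apply (continuity_pt_mult f g x). Qed.

Lemma cp_exp f x : continuity_pt f x -> continuity_pt (fun t => exp (f t)) x.
Proof.
  intros Hf; apply (continuity_pt_comp f exp x Hf).
  exact (derivable_continuous_pt _ _ (derivable_pt_exp _)).
Qed.

Lemma cp_ln f x : continuity_pt f x -> 0 < f x -> continuity_pt (fun t => ln (f t)) x.
Proof.
  intros Hf Hpos; apply (continuity_pt_comp f ln x Hf).
  exact (derivable_continuous_pt _ _ (exist _ _ (derivable_pt_lim_ln _ Hpos))).
Qed.

Lemma continuity_pt_ball f x eps : continuity_pt f x -> 0 < eps ->
  exists eta, 0 < eta /\ forall t, Rabs (t - x) < eta -> Rabs (f t - f x) < eps.
Proof.
  intros Hf Heps; destruct (Hf eps Heps) as [eta [Heta Hball]].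
  exists eta; split; [exact Heta|]; intros t Ht.
  destruct (Req_dec t x) as [-> | Hne].
  - rewrite Rminus_diag, Rabs_R0; exact Heps.
  - apply Hball; repeat split; auto.
Qed.

Lemma cp_rpow f x l : continuity_pt f x -> 0 < f x -> continuity_pt (fun t => rpow (f t) l) x.
Proof.
  intros Hf Hpos; destruct (continuity_pt_ball f x (f x) Hf Hpos) as [eta [Heta Hball]].
  apply (continuity_pt_locally_ext (fun t => exp (l * ln (f t))) _ eta x Heta).
  - intros y Hy; specialize (Hball y Hy); apply Rabs_def2 in Hball.
    rewrite rpow_exp_ln; [reflexivity | lra].
  - apply cp_exp, cp_mul; [apply cp_const | apply cp_ln; assumption].
Qed.

Lemma strict_ineqs_persist (F : nat -> R -> R) x k :
  (forall j, continuity_pt (F j) x) -> (forall j, (j < k)%nat -> 0 < F j x) ->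
  exists eta, 0 < eta /\ forall t, Rabs (t - x) < eta -> forall j, (j < k)%nat -> 0 < F j t.
Proof.
  intros HF; induction k as [|k IH]; intros Hpos.
  - exists 1; split; [lra | intros; lia].
  - destruct IH as [e1 [He1 H1]]; [intros j Hj; apply Hpos; lia|].
    destruct (continuity_pt_ball (F k) x (F k x) (HF k) (Hpos k ltac:(lia)))
      as [e2 [He2 H2]].
    exists (Rmin e1 e2); split; [apply Rmin_pos; assumption|].
    intros t Ht j Hj; pose proof (Rmin_l e1 e2); pose proof (Rmin_r e1 e2).
    destruct (Nat.eq_dec j k) as [-> | Hne].
    + specialize (H2 t ltac:(lra)); apply Rabs_def2 in H2; lra.
    + apply H1; [lra | lia].
Qed.

Definition first_below (v : nat -> R) (c d : R) : Prop :=
  exists k, v k < c /\ forall j, (j < k)%nat -> v j < d.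

Lemma first_below_persists (V : nat -> R -> R) c d t :
  (forall j, continuity_pt (V j) t) -> first_below (fun j => V j t) c d ->
  exists eta, 0 < eta /\
    forall t', Rabs (t' - t) < eta -> first_below (fun j => V j t') c d.
Proof.
  intros HV [k [Hk Hbefore]].
  destruct (strict_ineqs_persist (fun j t' => d - V j t') t k) as [e1 [He1 H1]].
  { intro j; apply cp_minus; [apply cp_const | apply HV]. }
  { intros j Hj; specialize (Hbefore j Hj); lra. }
  destruct (continuity_pt_ball (V k) t (c - V k t) (HV k) ltac:(lra)) as [e2 [He2 H2]].
  exists (Rmin e1 e2); split; [apply Rmin_pos; assumption|].
  intros t' Ht'; pose proof (Rmin_l e1 e2); pose proof (Rmin_r e1 e2).
  exists k; split.
  - specialize (H2 t' ltac:(lra)); apply Rabs_def2 in H2; lra.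
  - intros j Hj; specialize (H1 t' ltac:(lra) j Hj); cbv beta in H1; lra.
Qed.

Lemma interval_not_split (P Q : R -> Prop) al be : al < be -> P al -> Q be ->
  (forall t, al <= t <= be -> P t ->
     exists eta, 0 < eta /\ forall t', Rabs (t' - t) < eta -> P t') ->
  (forall t, al <= t <= be -> Q t ->
     exists eta, 0 < eta /\ forall t', Rabs (t' - t) < eta -> Q t') ->
  (forall t, P t -> Q t -> False) ->
  exists t, al <= t <= be /\ ~ P t /\ ~ Q t.
Proof.
  intros Hab Pal Qbe OP OQ Hdisj.
  set (T := fun x => al <= x <= be /\ forall t, al <= t <= x -> P t).
  assert (Tbd : bound T) by (exists be; intros x [Hx _]; lra).
  assert (Tal : T al) by (split; [lra | intros t Ht; replace t with al by lra; exact Pal]).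
  destruct (completeness T Tbd (ex_intro _ al Tal)) as [m [Hub Hlub]].
  assert (Hm1 : al <= m) by (apply Hub; exact Tal).
  assert (Hm2 : m <= be) by (apply Hlub; intros x [Hx _]; lra).
  assert (Happrox : forall t, t < m -> exists x, T x /\ t < x).
  { intros t Htm; apply NNPP; intro Hn.
    enough (m <= t) by lra.
    apply Hlub; intros x Tx; apply Rnot_lt_le; intro Hlt; apply Hn; exists x; auto. }
  exists m; split; [lra | split].
  - intro Pm; destruct (OP m ltac:(lra) Pm) as [eta [Heta Hnear]].
    pose proof (Rmin_l (m + eta / 2) be); pose proof (Rmin_r (m + eta / 2) be).
    set (x' := Rmin (m + eta / 2) be) in *.
    assert (Tx' : T x').
    { split; [split; [apply Rmin_glb | ]; lra|].
      intros t Ht; destruct (Rlt_le_dec (m - eta) t).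
      - apply Hnear, Rabs_def1; lra.
      - destruct (Happrox t ltac:(lra)) as [x [[_ Tx] Hx]]; apply Tx; lra. }
    pose proof (Hub x' Tx') as Hx'; unfold x', Rmin in Hx'.
    destruct (Rle_dec (m + eta / 2) be); [lra|].
    replace m with be in Pm by lra; exact (Hdisj be Pm Qbe).
  - intro Qm; destruct (OQ m ltac:(lra) Qm) as [eta [Heta Hnear]].
    destruct (Happrox (m - eta) ltac:(lra)) as [x [Tx Hx]].
    pose proof (Hub x Tx).
    destruct Tx as [Hxr Tx]; apply (Hdisj x); [apply Tx; lra | apply Hnear, Rabs_def1; lra].
Qed.

Definition growth (lam a x : R) : R := (lam - 1) * ln x + a - x.

Lemma growth_le_max lam a x : 1 < lam -> 0 < x -> growth lam a x <= growth lam a (lam - 1).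
Proof.
  intros Hlam Hx; pose proof (ln_affine_le_max (lam - 1) 1 x ltac:(lra) ltac:(lra) Hx).
  unfold growth; replace ((lam - 1) / 1) with (lam - 1) in * by field; lra.
Qed.

Lemma growth_root lam a c : 1 < lam -> 0 < c -> 0 <= growth lam a c ->
  exists z, 0 < z <= c /\ growth lam a z = 0.
Proof.
  intros Hlam Hc Hgc.
  destruct (ln_affine_root (lam - 1) a 1 c) as [z [Hz Hroot]]; unfold growth in *; try lra.
  exists z; split; [exact Hz | lra].
Qed.

Lemma rpow_fixed_iff_growth lam a b x : 0 < x ->
  (x = rpow x lam * exp (a - (b + 1) * x) <-> growth lam a x = b * x).
Proof.
  intros Hx; rewrite rpow_exp_ln, <- exp_plus by exact Hx; unfold growth; split; intro H.
  - apply (f_equal ln) in H; rewrite ln_exp in H; lra.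
  - rewrite <- (exp_ln x) at 1 by exact Hx; f_equal; lra.
Qed.

Lemma growth_sub_le lam a b x : 1 < lam -> 0 <= b -> 0 < x ->
  growth lam a x - b * x <= a - (lam - 1) * (1 - ln (lam - 1) + ln (b + 1)).
Proof.
  intros Hlam Hb Hx; pose proof (ln_affine_le_max (lam - 1) (b + 1) x ltac:(lra) ltac:(lra) Hx).
  unfold Rdiv in *; rewrite ln_mult, ln_Rinv in * by (try apply Rinv_0_lt_compat; lra).
  unfold growth; lra.
Qed.

Lemma smallest_fixed_bound lam a b xs : 1 < lam -> 0 <= b -> 0 < xs ->
  growth lam a xs = b * xs -> (forall x, 0 < x < xs -> growth lam a x <> b * x) ->
  (b + 1) * xs <= lam - 1.
Proof.
  intros Hlam Hb Hxs Hfix Hmin; apply Rnot_lt_le; intro Hlt.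
  set (m := (lam - 1) / (b + 1)).
  assert (Hm : 0 < m) by (apply Rdiv_lt_0_compat; lra).
  assert (Hbm : (b + 1) * m = lam - 1) by (unfold m; field; lra).
  assert (Hmxs : m < xs) by nra.
  assert (Hpeak : 0 <= (lam - 1) * ln m + a - (b + 1) * m).
  { pose proof (ln_affine_le_max (lam - 1) (b + 1) xs ltac:(lra) ltac:(lra) Hxs) as Hmax.
    unfold growth in Hfix; fold m in Hmax; lra. }
  destruct (ln_affine_root (lam - 1) a (b + 1) m) as [z [Hz Hroot]]; try lra.
  apply (Hmin z); [lra | unfold growth; lra].
Qed.

Lemma growth_neg_near0 lam a x : 1 < lam -> 0 < x -> x <= exp (- a / (lam - 1)) ->
  growth lam a x < 0.
Proof.
  intros Hlam Hx Hxe.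
  assert (Hln : ln x <= - a / (lam - 1)).
  { rewrite <- (ln_exp (- a / (lam - 1))).
    destruct Hxe as [Hlt | ->]; [left; apply ln_increasing; assumption | right; reflexivity]. }
  assert (Hmul : (lam - 1) * ln x <= (lam - 1) * (- a / (lam - 1)))
    by (apply Rmult_le_compat_l; lra).
  replace ((lam - 1) * (- a / (lam - 1))) with (- a) in Hmul by (field; lra).
  unfold growth; lra.
Qed.

Section Orbit.

Variables lam b s r : R.
Hypothesis Hlam : 1 < lam.
Hypothesis Hb : 0 <= b.
Hypothesis Hs : 0 < s.
Local Notation a := (r + ln s).

Lemma orbit_fst_SS p n :
  fst (orbit lam b s r p (S (S n))) =
  s * (rpow (fst (orbit lam b s r p n)) lam *
       exp (r - b * fst (orbit lam b s r p (S n)) - fst (orbit lam b s r p n))).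
Proof. reflexivity. Qed.

Lemma orbit_snd p n : snd (orbit lam b s r p n) = fst (orbit lam b s r p (S n)) / s.
Proof. simpl; field; lra. Qed.

Lemma two_step_growth u w : 0 < u ->
  s * (rpow u lam * exp (r - b * w - u)) = u * exp (growth lam a u - b * w).
Proof.
  intros Hu; rewrite rpow_exp_ln by exact Hu.
  rewrite <- (exp_ln s) at 1 by exact Hs; rewrite <- (exp_ln u) at 3 by exact Hu.
  rewrite <- !exp_plus; f_equal; unfold growth; ring.
Qed.

Lemma orbit_fst_SS_growth p n : 0 < fst (orbit lam b s r p n) ->
  fst (orbit lam b s r p (S (S n))) =
  fst (orbit lam b s r p n) *
  exp (growth lam a (fst (orbit lam b s r p n)) - b * fst (orbit lam b s r p (S n))).
Proof. intros Hpos; rewrite orbit_fst_SS; apply two_step_growth, Hpos. Qed.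

Lemma orbit_nonneg x0 y0 : 0 <= x0 -> 0 <= y0 -> forall n,
  0 <= fst (orbit lam b s r (x0, y0) n) /\ 0 <= snd (orbit lam b s r (x0, y0) n).
Proof.
  intros Hx Hy n; induction n as [|n [H1 H2]]; simpl; [lra|]; split.
  - apply Rmult_le_pos; lra.
  - apply Rmult_le_pos; [apply rpow_ge0 | left; apply exp_pos].
Qed.

Lemma orbit_pos_continuous y0 t : 0 < t -> 0 < y0 -> forall n,
  0 < fst (orbit lam b s r (t, y0) n) /\ 0 < snd (orbit lam b s r (t, y0) n) /\
  continuity_pt (fun t' => fst (orbit lam b s r (t', y0) n)) t /\
  continuity_pt (fun t' => snd (orbit lam b s r (t', y0) n)) t.
Proof.
  intros Ht Hy n; induction n as [|n [P1 [P2 [C1 C2]]]].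
  - simpl; repeat split; [lra | lra | apply cp_id | apply cp_const].
  - simpl orbit; unfold step; simpl; repeat split.
    + apply Rmult_lt_0_compat; assumption.
    + apply Rmult_lt_0_compat; [rewrite rpow_exp_ln by exact P1 |]; apply exp_pos.
    + apply cp_mul; [apply cp_const | exact C2].
    + apply cp_mul; [apply cp_rpow; assumption |].
      apply cp_exp, cp_minus; [apply cp_minus; [apply cp_const |] | exact C1].
      apply cp_mul; [apply cp_const | apply cp_mul; [apply cp_const | exact C2]].
Qed.

Lemma conv0_of_fst p : Un_cv (fun n => fst (orbit lam b s r p n)) 0 -> conv0 lam b s r p.
Proof.
  intros Hfst; split; [exact Hfst|]; intros eps Heps.
  destruct (Hfst (eps * s) ltac:(nra)) as [N HN]; exists N; intros n Hn.
  specialize (HN (S n) ltac:(lia)); unfold R_dist in *; rewrite Rminus_0_r in *.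
  rewrite orbit_snd; unfold Rdiv; rewrite Rabs_mult, Rabs_inv, (Rabs_pos_eq s) by lra.
  apply (Rmult_lt_reg_r s); [exact Hs|]; rewrite Rmult_assoc, Rinv_l by lra; lra.
Qed.

Lemma not_conv0_even_lb p z : 0 < z -> (forall k, z <= fst (orbit lam b s r p (2 * k))) ->
  ~ conv0 lam b s r p.
Proof. intros Hz Hlb [Hfst _]; exact (not_Un_cv0_even _ z Hz Hlb Hfst). Qed.

Lemma fixed_point_not_conv0 x y : 0 < x -> step lam b s r (x, y) = (x, y) ->
  ~ conv0 lam b s r (x, y).
Proof.
  intros Hx Hfix; apply (not_conv0_even_lb _ x Hx); intro k.
  enough (Hconst : orbit lam b s r (x, y) (2 * k) = (x, y)) by (rewrite Hconst; simpl; lra).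
  generalize (2 * k)%nat; intro n; induction n as [|n IH]; [reflexivity|].
  simpl; rewrite IH; exact Hfix.
Qed.

(* A zero [z] of [growth] gives the 2-cycle [(z, 0) -> (0, z / s) -> (z, 0)]. *)
Lemma period2_not_conv0 z : 0 < z -> growth lam a z = 0 -> ~ conv0 lam b s r (z, 0).
Proof.
  intros Hz Hroot; apply (not_conv0_even_lb _ z Hz); intro k.
  enough (Hcycle : orbit lam b s r (z, 0) (2 * k) = (z, 0)) by (rewrite Hcycle; simpl; lra).
  induction k as [|k IH]; [reflexivity|].
  replace (2 * S k)%nat with (S (S (2 * k))) by lia.
  change (orbit lam b s r (z, 0) (S (S (2 * k)))) with
    (step lam b s r (step lam b s r (orbit lam b s r (z, 0) (2 * k)))).
  rewrite IH; unfold step; simpl.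
  rewrite !Rmult_0_r, rpow0, Rmult_0_l.
  replace (r - 0 - z) with (r - b * 0 - z) by ring.
  rewrite two_step_growth, Hroot by exact Hz.
  rewrite Rmult_0_r, Rminus_0_r, exp_0, Rmult_1_r; reflexivity.
Qed.

Lemma step_fixed_iff x y : 0 < x ->
  step lam b s r (x, y) = (x, y) <-> y = x / s /\ growth lam a x = b * x.
Proof.
  intros Hx; unfold step; simpl; split.
  - intros Hfix; injection Hfix as Hxy Hy.
    assert (Hy' : y = x / s) by (rewrite <- Hxy; field; lra).
    split; [exact Hy'|].
    rewrite Hxy in Hy.
    assert (Hone : x * exp (growth lam a x - b * x) = x * 1)
      by (rewrite <- two_step_growth, Hy by exact Hx; lra).
    apply Rmult_eq_reg_l in Hone; [|lra].
    apply (f_equal ln) in Hone; rewrite ln_exp, ln_1 in Hone; lra.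
  - intros [-> Hg]; f_equal; [field; lra|].
    replace (s * (x / s)) with x by (field; lra).
    apply (Rmult_eq_reg_l s); [|lra].
    rewrite two_step_growth, Hg, Rminus_diag, exp_0 by exact Hx; field; lra.
Qed.

Lemma orbit_fst_SS_le x0 y0 n : 0 <= x0 -> 0 <= y0 ->
  fst (orbit lam b s r (x0, y0) (S (S n))) <=
  exp (growth lam a (lam - 1)) * fst (orbit lam b s r (x0, y0) n).
Proof.
  intros Hx Hy; destruct (orbit_nonneg x0 y0 Hx Hy n) as [[Hpos | Hzero] _].
  - rewrite orbit_fst_SS_growth, (Rmult_comm (exp _)) by exact Hpos.
    apply Rmult_le_compat_l; [lra | apply exp_le_compat].
    destruct (orbit_nonneg x0 y0 Hx Hy (S n)) as [Hnext _].
    pose proof (growth_le_max lam a _ Hlam Hpos); pose proof (Rmult_le_pos _ _ Hb Hnext); lra.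
  - rewrite orbit_fst_SS, <- Hzero, rpow0; lra.
Qed.

Lemma conv0_of_growth_neg x0 y0 : growth lam a (lam - 1) < 0 -> 0 <= x0 -> 0 <= y0 ->
  conv0 lam b s r (x0, y0).
Proof.
  intros Hneg Hx Hy; apply conv0_of_fst.
  set (q := exp (growth lam a (lam - 1))).
  assert (Hq : 0 <= q < 1)
    by (split; [left; apply exp_pos | rewrite <- exp_0; apply exp_increasing; lra]).
  set (M := x0 + s * y0).
  assert (HM : 0 <= M) by (pose proof (Rmult_le_pos s y0 ltac:(lra) Hy); unfold M; lra).
  set (u := fun n => fst (orbit lam b s r (x0, y0) n)).
  assert (Hbound : forall n, u n <= M * q ^ Nat.div2 n /\ u (S n) <= M * q ^ Nat.div2 (S n)).
  { induction n as [|n [IH1 IH2]].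
    - unfold u, M; simpl; pose proof (Rmult_le_pos s y0 ltac:(lra) Hy); lra.
    - split; [exact IH2|].
      apply (Rle_trans _ (q * u n)); [apply orbit_fst_SS_le; assumption|].
      change (Nat.div2 (S (S n))) with (S (Nat.div2 n)); simpl pow.
      rewrite <- Rmult_assoc, (Rmult_comm M q), Rmult_assoc.
      apply Rmult_le_compat_l; [lra | exact IH1]. }
  apply (Un_cv0_half_geometric u M q Hq HM); intro n; split.
  - apply orbit_nonneg; assumption.
  - apply Hbound.
Qed.

Lemma fixed_point_trivial x y :
  a < (lam - 1) * (1 - ln (lam - 1) + ln (b + 1)) -> 0 <= x -> 0 <= y ->
  step lam b s r (x, y) = (x, y) -> x = 0 /\ y = 0.
Proof.
  intros Ha [Hx | <-] Hy Hfix.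
  - apply step_fixed_iff in Hfix as [_ Hg]; [|exact Hx].
    pose proof (growth_sub_le lam a b x Hlam Hb Hx); lra.
  - unfold step in Hfix; simpl in Hfix; injection Hfix as _ Hy0.
    rewrite rpow0, Rmult_0_l in Hy0; lra.
Qed.

Section Escape.

Variables del eps : R.
Hypothesis Hdel : 0 < del < lam - 1.
Hypothesis Hgrowth_small : forall x, 0 < x <= del -> growth lam a x < 0.
Hypothesis Heps : 0 < eps <= del.
Hypothesis Heps_b : b * eps < growth lam a (lam - 1).

Let U t n := fst (orbit lam b s r (t, eps / s) n).

Lemma U_pos t n : 0 < t -> 0 < U t n.
Proof.
  intros Ht; apply (orbit_pos_continuous (eps / s) t Ht); apply Rdiv_lt_0_compat; lra.
Qed.

Lemma U_continuous t n : 0 < t -> continuity_pt (fun t' => U t' n) t.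
Proof.
  intros Ht; apply (orbit_pos_continuous (eps / s) t Ht); apply Rdiv_lt_0_compat; lra.
Qed.

Lemma U_SS t n : 0 < t ->
  U t (S (S n)) = U t n * exp (growth lam a (U t n) - b * U t (S n)).
Proof. intros Ht; apply orbit_fst_SS_growth, U_pos, Ht. Qed.

Lemma U_odd_le t k : 0 < t -> U t (S (2 * k)) <= eps.
Proof.
  intros Ht; induction k as [|k IH].
  - unfold U; simpl; right; field; lra.
  - replace (S (2 * S k)) with (S (S (S (2 * k)))) by lia.
    rewrite U_SS by exact Ht.
    pose proof (U_pos t (S (2 * k)) Ht) as Hodd; pose proof (U_pos t (S (S (2 * k))) Ht) as Heven.
    pose proof (Hgrowth_small (U t (S (2 * k))) ltac:(lra)).
    pose proof (Rmult_le_pos b _ Hb (Rlt_le _ _ Heven)).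
    apply (Rle_trans _ (U t (S (2 * k)))); [apply mul_exp_le|]; lra.
Qed.

Lemma U_fall t m : 0 < t -> U t (2 * m) = del -> U t (2 * S m) < del.
Proof.
  intros Ht Hm; replace (2 * S m)%nat with (S (S (2 * m))) by lia.
  rewrite U_SS, Hm by exact Ht; apply mul_exp_lt; [lra|].
  pose proof (Hgrowth_small del ltac:(lra)).
  pose proof (Rmult_le_pos b _ Hb (Rlt_le _ _ (U_pos t (S (2 * m)) Ht))); lra.
Qed.

Lemma U_rise t m : 0 < t -> U t (2 * m) = lam - 1 -> lam - 1 < U t (2 * S m).
Proof.
  intros Ht Hm; replace (2 * S m)%nat with (S (S (2 * m))) by lia.
  rewrite U_SS, Hm by exact Ht; apply mul_exp_gt; [lra|].
  pose proof (Rmult_le_compat_l b _ _ Hb (U_odd_le t m Ht)); lra.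
Qed.

(* Escaping above [lam - 1] before dropping below [del] is a first passage of [- U]. *)
Let drops t := first_below (fun k => U t (2 * k)%nat) del (lam - 1).
Let escapes t := first_below (fun k => - U t (2 * k)%nat) (- (lam - 1)) (- del).

Lemma drops_escapes_disjoint t : drops t -> escapes t -> False.
Proof.
  intros [k1 [H1 H1']] [k2 [H2 H2']]; cbv beta in *.
  destruct (Compare_dec.lt_eq_lt_dec k1 k2) as [[Hlt | ->] | Hgt].
  - specialize (H2' k1 Hlt); lra.
  - lra.
  - specialize (H1' k2 Hgt); lra.
Qed.

Lemma band_invariant t : 0 < t -> ~ drops t -> ~ escapes t ->
  forall k, del < U t (2 * k) < lam - 1.
Proof.
  intros Ht Hnd Hne.
  assert (Hband : forall m j, (j < m)%nat -> del < U t (2 * j) < lam - 1).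
  { induction m as [|m IH]; intros j Hj; [lia|].
    destruct (Nat.eq_dec j m) as [-> | Hjm]; [|apply IH; lia].
    assert (IH' : forall j, (j <= m)%nat -> j <> m -> del < U t (2 * j) < lam - 1)
      by (intros j Hj' Hjm'; apply IH; lia).
    destruct (Rtotal_order (U t (2 * m)) del) as [Hlow | [Hdel_eq | Hhigh]].
    - exfalso; apply Hnd; exists m; split; [exact Hlow|].
      intros j Hj'; apply IH, Hj'.
    - exfalso; apply Hnd; exists (S m); split; [apply U_fall; assumption|].
      intros j Hj'; destruct (Nat.eq_dec j m) as [-> | Hjm']; [lra | apply IH'; lia].
    - destruct (Rtotal_order (U t (2 * m)) (lam - 1)) as [Hin | [Htop | Hover]]; [lra | |].
      + exfalso; apply Hne; exists (S m); split; [cbv beta; pose proof (U_rise t m Ht Htop); lra|].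
        intros j Hj'; cbv beta; destruct (Nat.eq_dec j m) as [-> | Hjm'];
          [lra | pose proof (IH' j ltac:(lia) Hjm'); lra].
      + exfalso; apply Hne; exists m; split; [cbv beta; lra|].
        intros j Hj'; cbv beta; pose proof (IH j Hj'); lra. }
  intro k; apply (Hband (S k)); lia.
Qed.

Lemma exists_nonconvergent : exists t, 0 < t /\ ~ conv0 lam b s r (t, eps / s).
Proof.
  destruct (interval_not_split drops escapes (del / 2) lam) as [t [Ht [Hnd Hne]]].
  - lra.
  - exists 0%nat; split; [unfold U; simpl; lra | intros; lia].
  - exists 0%nat; split; [unfold U; simpl; lra | intros; lia].
  - intros t Ht; apply (first_below_persists (fun j t' => U t' (2 * j)%nat)).
    intro j; apply U_continuous; lra.
  - intros t Ht; apply (first_below_persists (fun j t' => - U t' (2 * j)%nat)).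
    intro j; apply cp_opp, U_continuous; lra.
  - exact drops_escapes_disjoint.
  - exists t; split; [lra|].
    apply (not_conv0_even_lb _ del); [lra|].
    intro k; pose proof (band_invariant t ltac:(lra) Hnd Hne k); unfold U in *; lra.
Qed.

End Escape.

Lemma nonconvergent_positive_orbit : 0 < growth lam a (lam - 1) ->
  exists x0 y0, 0 < x0 /\ 0 < y0 /\ ~ conv0 lam b s r (x0, y0).
Proof.
  intros Htop.
  pose proof (Rmin_l ((lam - 1) / 2) (exp (- a / (lam - 1)))) as Hdel_l.
  pose proof (Rmin_r ((lam - 1) / 2) (exp (- a / (lam - 1)))) as Hdel_r.
  set (del := Rmin ((lam - 1) / 2) (exp (- a / (lam - 1)))) in *.
  assert (Hdel : 0 < del) by (apply Rmin_pos; [lra | apply exp_pos]).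
  pose proof (Rmin_l del (growth lam a (lam - 1) / (b + 1))) as Heps_l.
  pose proof (Rmin_r del (growth lam a (lam - 1) / (b + 1))) as Heps_r.
  set (eps := Rmin del (growth lam a (lam - 1) / (b + 1))) in *.
  assert (Heps : 0 < eps) by (apply Rmin_pos; [lra | apply Rdiv_lt_0_compat; lra]).
  destruct (exists_nonconvergent del eps) as [t [Ht Hnc]].
  - lra.
  - intros x Hx; apply growth_neg_near0; lra.
  - lra.
  - assert (Hb_eps : b * eps <= b * (growth lam a (lam - 1) / (b + 1)))
      by (apply Rmult_le_compat_l; lra).
    replace (b * (growth lam a (lam - 1) / (b + 1)))
      with (growth lam a (lam - 1) - growth lam a (lam - 1) / (b + 1)) in Hb_eps
      by (field; lra).
    assert (0 < growth lam a (lam - 1) / (b + 1)) by (apply Rdiv_lt_0_compat; lra).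
    lra.
  - exists t, (eps / s); split; [exact Ht | split; [apply Rdiv_lt_0_compat; lra | exact Hnc]].
Qed.

End Orbit.

Theorem mainTheorem11 (lam b s r : R)
  (Hlam : 1 < lam) (Hb : 0 < b) (Hs0 : 0 < s) (Hs1 : s <= 1) :
  let a := r + ln s in
  (* (a) *)
  ((forall x0 y0, 0 <= x0 -> 0 <= y0 -> conv0 lam b s r (x0, y0)) <->
     a < (lam - 1) * (1 - ln (lam - 1))) /\
  (* (b) *)
  ((lam - 1) * (1 - ln (lam - 1)) < a ->
   a < (lam - 1) * (1 - ln (lam - 1) + ln (b + 1)) ->
     (forall x y, 0 <= x -> 0 <= y -> step lam b s r (x, y) = (x, y) ->
        x = 0 /\ y = 0) /\
     (exists x0 y0, 0 < x0 /\ 0 < y0 /\ ~ conv0 lam b s r (x0, y0))) /\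
  (* (c) and (d) *)
  (b <= (lam - 1) / lam * exp (1 / (lam - 1)) - 1 ->
   (lam - 1) * (1 - ln (lam - 1) + ln (b + 1)) <= a ->
   a <= lam - (lam - 1) * ln lam ->
   forall xs, 0 < xs ->
     xs = rpow xs lam * exp (a - (b + 1) * xs) ->
     (forall x, 0 < x < xs -> x <> rpow x lam * exp (a - (b + 1) * x)) ->
     (exists x0 y0, 0 <= x0 < xs /\ 0 <= y0 < xs / s /\
        ~ conv0 lam b s r (x0, y0)) /\
     (exists x0 y0,
        ((xs <= x0 <= lam /\ 0 <= y0 <= xs / s) \/
         (0 <= x0 <= xs /\ xs / s <= y0 <= lam / s)) /\
        ~ conv0 lam b s r (x0, y0))).
Proof.
  cbv zeta.
  assert (Hb0 : 0 <= b) by lra.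
  assert (Htop : growth lam (r + ln s) (lam - 1) = (r + ln s) - (lam - 1) * (1 - ln (lam - 1)))
    by (unfold growth; ring).
  split; [|split].
  - split.
    + intro Hall; apply Rnot_le_lt; intro Hge.
      destruct (growth_root lam (r + ln s) (lam - 1)) as [z [[Hz _] Hroot]]; [lra | lra | lra |].
      exact (period2_not_conv0 lam b s r Hs0 z Hz Hroot (Hall z 0 ltac:(lra) ltac:(lra))).
    + intros Ha x0 y0 Hx Hy; apply conv0_of_growth_neg; try assumption; lra.
  - intros Hlo Hhi; split.
    + intros x y; apply fixed_point_trivial; assumption.
    + apply nonconvergent_positive_orbit; try assumption; lra.
  - intros _ _ _ xs Hxs Hfix Hmin.
    apply rpow_fixed_iff_growth in Hfix; [|exact Hxs].
    assert (Hbxs : 0 < b * xs) by (apply Rmult_lt_0_compat; assumption).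
    split.
    + destruct (growth_root lam (r + ln s) xs) as [z [[Hz Hzxs] Hroot]]; [lra | lra | lra |].
      exists z, 0; split; [|split; [split; [lra | apply Rdiv_lt_0_compat; lra] |]].
      * destruct Hzxs as [Hlt | ->]; lra.
      * exact (period2_not_conv0 lam b s r Hs0 z Hz Hroot).
    + assert (Hsmall : (b + 1) * xs <= lam - 1).
      { apply (smallest_fixed_bound lam (r + ln s) b xs); try assumption.
        intros x Hx; rewrite <- rpow_fixed_iff_growth by lra; apply Hmin, Hx. }
      exists xs, (xs / s); split.
      * left; split; [nra | split; [apply Rlt_le, Rdiv_lt_0_compat | right]; lra].
      * apply fixed_point_not_conv0; [exact Hxs|].
        apply step_fixed_iff; [assumption | assumption | split; [reflexivity | exact Hfix]].
Qed.
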